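(* Let $\|\cdot\|$ be a norm on $\mathbf{R}^p$ with dual norm $\|\cdot\|_*$, let $0\le v\le 1$, $M_v>0$, and let $g_0,\dots,g_T:\mathbf{R}^p\to\mathbf{R}$ be convex functions such that each $g_t$ has H\''older continuous (sub)gradients of degree $v$ with constant $M_v(g_t)<M_v$, i.e. $\|\nabla g_t(x)-\nabla g_t(y)\|_*\le M_v(g_t)\|x-y\|^v$ for all $x,y$. Let $h$ be a simple convex function and set $f_{g_t}(x)=g_t(x)+h(x)$. Let $x^*$ be a solution of $\min_x \frac{1}{T+1}\sum_{t=0}^T g_t(x)+h(x)$. Let the sequence $\{x_t\}$ and the numbers $L_t$ be generated by the general O-UPGM described in the context (with inputs $L_0>0$, $\epsilon>0$, starting point $x_0$). Then $$\sum_{t=0}^{T}\frac{1}{L_{t+1}}\bigl[f_{g_t}(x_{t+1})-f_{g_t}(x^* )\bigr]\le \frac{\epsilon}{2}S_T+2r_0(x^* ),$$ where $S_T=\sum_{t=1}^{T+1}\frac{1}{L_t}$ and $r_0(y)=\xi(x_0,y)$.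
   Context: A prox-function $d:\mathbf{R}^p\to\mathbf{R}$ is differentiable, strongly convex with convexity parameter $1$ with respect to $\|\cdot\|$, and has minimum value $0$. The Bregman distance is $\xi(x,y)=d(y)-d(x)-\langle\nabla d(x),y-x\rangle$. $\nabla g$ denotes a gradient, or any subgradient when $g$ is nonsmooth. For $M>0$ and a function $g$, the Bregman mapping is $\mathfrak{B}_{M,g}(x)=\arg\min_y\bigl[g(x)+\langle\nabla g(x),y-x\rangle+M\xi(y,x)+h(y)\bigr]$. General O-UPGM: given $L_0>0$, $\epsilon>0$ and $x_0$, for $t=0,1,\dots,T$: find the smallest integer $i_t\ge 0$ such that $\hat x=\mathfrak{B}_{2^{i_t}L_t,g_t}(x_t)$ satisfies $g_t(\hat x)+h(\hat x)\le g_t(x_t)+\langle\nabla g_t(x_t),\hat x-x_t\rangle+2^{i_t}L_t\xi(\hat x,x_t)+h(\hat x)+\frac{\epsilon}{2}$; then set $x_{t+1}=\hat x$ and $L_{t+1}=2^{i_t-1}L_t$. The output is $\bar x=\frac{1}{S_T}\sum_{t=1}^{T+1}\frac{1}{L_t}x_t$. *)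

From HB Require Import structures.
From mathcomp Require Import all_boot all_order all_algebra.
From mathcomp Require Import all_classical all_reals all_analysis.
Set Implicit Arguments. Unset Strict Implicit. Unset Printing Implicit Defensive.
Import Order.TTheory GRing.Theory Num.Theory.
Import numFieldNormedType.Exports.
Local Open Scope classical_set_scope.
Local Open Scope ring_scope.

Section Defs.
Variables (R : realType) (p : nat).
Notation vec := 'rV[R]_p.

Definition dotp (s x : vec) : R := \sum_(i < p) s 0 i * x 0 i.

Definition is_norm (nrm : vec -> R) : Prop :=
  [/\ forall x, 0 <= nrm x,
      forall x, nrm x = 0 -> x = 0,
      forall (a : R) x, nrm (a *: x) = `|a| * nrm x
    & forall x y, nrm (x + y) <= nrm x + nrm y].

Definition dual_norm (nrm : vec -> R) (s : vec) : R :=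
  sup [set dotp s x | x in [set x | nrm x <= 1]].

Definition convex_fun (f : vec -> R) : Prop :=
  forall (x y : vec) (l : R), 0 <= l <= 1 ->
    f (l *: x + (1 - l) *: y) <= l * f x + (1 - l) * f y.

Definition is_subgrad (f : vec -> R) (gf : vec -> vec) : Prop :=
  forall x y, f x + dotp (gf x) (y - x) <= f y.

Definition is_gradient (d : vec -> R) (gd : vec -> vec) : Prop :=
  forall x, differentiable d x /\ forall h, 'd d x h = dotp (gd x) h.

Definition prox_function (nrm : vec -> R) (d : vec -> R) (gd : vec -> vec) : Prop :=
  [/\ is_gradient d gd,
      (forall x y, d x + dotp (gd x) (y - x) + 2^-1 * (nrm (y - x)) ^+ 2 <= d y),
      (forall x, 0 <= d x) & (exists x, d x = 0)].

Definition bregman (d : vec -> R) (gd : vec -> vec) (x y : vec) : R :=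
  d y - d x - dotp (gd x) (y - x).

Definition holder_grad (nrm : vec -> R) (gf : vec -> vec) (v M : R) : Prop :=
  forall x y, dual_norm nrm (gf x - gf y) <= M * (nrm (x - y)) `^ v.

Definition bregman_map (d : vec -> R) (gd : vec -> vec) (h : vec -> R)
  (M : R) (g : vec -> R) (gg : vec -> vec) (x y : vec) : Prop :=
  forall z, g x + dotp (gg x) (y - x) + M * bregman d gd x y + h y
            <= g x + dotp (gg x) (z - x) + M * bregman d gd x z + h z.

Definition upgm_test (d : vec -> R) (gd : vec -> vec) (h : vec -> R)
  (M eps : R) (g : vec -> R) (gg : vec -> vec) (x xh : vec) : Prop :=
  g xh + h xh <= g x + dotp (gg x) (xh - x) + M * bregman d gd x xh + h xh + eps / 2.

Definition O_UPGM (d : vec -> R) (gd : vec -> vec) (h : vec -> R)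
  (g : nat -> vec -> R) (gg : nat -> vec -> vec) (L0 eps : R) (x0 : vec) (T : nat)
  (x : nat -> vec) (L : nat -> R) (i : nat -> nat) : Prop :=
  [/\ x 0%N = x0, L 0%N = L0 &
     forall t, (t <= T)%N ->
       [/\ (forall j, (j < i t)%N -> forall y,
              bregman_map d gd h (2 ^+ j * L t) (g t) (gg t) (x t) y ->
              ~ upgm_test d gd h (2 ^+ j * L t) eps (g t) (gg t) (x t) y),
           bregman_map d gd h (2 ^+ i t * L t) (g t) (gg t) (x t) (x t.+1),
           upgm_test d gd h (2 ^+ i t * L t) eps (g t) (gg t) (x t) (x t.+1)
         & L t.+1 = 2 ^+ i t * L t / 2]].

End Defs.

From HB Require Import structures.
From mathcomp Require Import all_boot all_order all_algebra.
From mathcomp Require Import all_classical all_reals all_analysis.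
From mathcomp Require Import ring lra.
Set Implicit Arguments. Unset Strict Implicit. Unset Printing Implicit Defensive.
Import Order.TTheory GRing.Theory Num.Theory.
Import numFieldNormedType.Exports.
Local Open Scope classical_set_scope.
Local Open Scope ring_scope.

(* Optimality of x_{t+1} for the Bregman model, the convexity of h and the
   derivative of d along the segment from x_{t+1} give the three-point
   inequality  model(x_{t+1}) + M xi(x_{t+1}, y) <= model(y).  With the
   line-search test and the subgradient inequality for g_t at x_t this yields
     f_{g_t}(x_{t+1}) - f_{g_t}(x^* ) <= eps/2 + M (r_t - r_{t+1}),
   where M = 2^{i_t} L_t = 2 L_{t+1} and r_t = xi(x_t, x^* ).  Dividing by
   L_{t+1} and telescoping gives the claim, as r_{T+1} >= 0. *)

Section Bregman.
Variables (R : realType) (p : nat).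
Notation vec := 'rV[R]_p.

Lemma dotp_affine (s a b c : vec) (l : R) :
  dotp s (l *: a + (1 - l) *: b - c) = l * dotp s (a - c) + (1 - l) * dotp s (b - c).
Proof.
rewrite /dotp !mulr_sumr -big_split; apply: eq_bigr => k _; rewrite !mxE /=; ring.
Qed.

Lemma gradient_quotient_cvg (d : vec -> R) (gd : vec -> vec) (y w : vec) :
  is_gradient d gd ->
  (fun l : R => l^-1 * (d (l *: w + y) - d y)) @ 0^'+ --> dotp (gd y) w.
Proof.
move=> /(_ y) [dy dyE].
have /cvg_ex [l dwl] := @diff_derivable _ _ _ _ _ w dy.
have : 'D_w d y = l by exact: cvg_lim.
rewrite deriveE // dyE => -> P /dwl [e /= e0 eP].
by exists e => //= u uy u0; apply: eP (lt0r_neq0 u0).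
Qed.

Lemma le_dotp_gradient (d : vec -> R) (gd : vec -> vec) (y w : vec) (c : R) :
  is_gradient d gd ->
  (forall l, 0 < l < 1 -> c <= l^-1 * (d (l *: w + y) - d y)) ->
  c <= dotp (gd y) w.
Proof.
move=> gradd cle; have qcvg := gradient_quotient_cvg (y := y) (w := w) gradd.
apply: (cvgr_to_ge qcvg).
near=> l; apply: cle; apply/andP; split.
- by near: l; exact: nbhs_right_gt.
- by near: l; exact: nbhs_right_lt ltr01.
Unshelve. all: by end_near.
Qed.

Lemma bregman_ge0 (nrm : vec -> R) (d : vec -> R) (gd : vec -> vec) (x y : vec) :
  prox_function nrm d gd -> 0 <= bregman d gd x y.
Proof.
move=> [_ sconv _ _]; rewrite /bregman.
have := sconv x y; have := sqr_ge0 (nrm (y - x)); lra.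
Qed.

(* Along the segment from y to z, h is bounded by its chord and d contributes
   <grad d(y), z - y> in the limit, which turns xi(x, z) into
   xi(x, y) + xi(y, z) plus linear terms. *)
Lemma bregman_map_three_point d gd h (M : R) g gg (x y z : vec) :
  is_gradient d gd -> convex_fun h -> 0 < M -> bregman_map d gd h M g gg x y ->
  g x + dotp (gg x) (y - x) + M * bregman d gd x y + h y + M * bregman d gd y z
   <= g x + dotp (gg x) (z - x) + M * bregman d gd x z + h z.
Proof.
move=> gradd convh M0 miny.
rewrite -subr_le0; set A := _ - _.
suff : A / M + dotp (gd y) (z - y) <= dotp (gd y) (z - y).
  by rewrite gerDr pmulr_lle0 ?invr_gt0.
apply: le_dotp_gradient gradd _ => l /andP[l0 l1].
have segE : l *: (z - y) + y = l *: z + (1 - l) *: y.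
  by rewrite scalerBr scalerBl scale1r -addrA [- _ + _]addrC.
have := miny (l *: (z - y) + y); have := convh z y l.
rewrite (ltW l0) (ltW l1) => /(_ isT).
rewrite /A /bregman segE !dotp_affine; set D := d _ => hchord minyl.
rewrite -(ler_pM2l l0) mulrA mulfV ?lt0r_neq0 // mul1r -(ler_pM2l M0).
have -> : M * (l * (A / M + dotp (gd y) (z - y))) = l * A + M * l * dotp (gd y) (z - y).
  by field; rewrite lt0r_neq0.
rewrite /A /bregman; nra.
Qed.

Lemma upgm_step_le d gd h (M eps : R) g gg (x y z : vec) :
  is_gradient d gd -> convex_fun h -> 0 < M -> is_subgrad g gg ->
  bregman_map d gd h M g gg x y -> upgm_test d gd h M eps g gg x y ->
  (g y + h y) - (g z + h z) <= eps / 2 + M * (bregman d gd x z - bregman d gd y z).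
Proof.
move=> gradd convh M0 subg miny test.
have := bregman_map_three_point z gradd convh M0 miny.
have := subg x z; move: test; rewrite /upgm_test mulrBr; lra.
Qed.

End Bregman.

Lemma ler_sum_telescope (R : numDomainType) (a c b : nat -> R) (n : nat) :
  (forall t, (t < n)%N -> a t <= c t + (b t - b t.+1)) ->
  \sum_(0 <= t < n) a t <= \sum_(0 <= t < n) c t + (b 0%N - b n).
Proof.
move=> le_ac.
rewrite -opprB -(telescope_sumr b (leq0n n)) -sumrN -big_split /=.
by apply: ler_sum_nat => t /andP[_ tn]; rewrite opprB; exact: le_ac.
Qed.

Lemma O_UPGM_L_gt0 (R : realType) (p : nat) d (gd : 'rV[R]_p -> 'rV[R]_p) h g gg
    (L0 eps : R) x0 T x L i :
  0 < L0 -> O_UPGM d gd h g gg L0 eps x0 T x L i ->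
  forall t, (t <= T.+1)%N -> 0 < L t.
Proof.
move=> L00 [_ L0E run]; elim=> [|t IH] tT; first by rewrite L0E.
have [_ _ _ ->] := run t tT.
by rewrite divr_gt0 // mulr_gt0 ?exprn_gt0 ?IH // ltnW.
Qed.

Theorem theorem1 (R : realType) (p : nat) (nrm : 'rV[R]_p -> R)
  (d : 'rV[R]_p -> R) (gd : 'rV[R]_p -> 'rV[R]_p)
  (v Mv : R) (T : nat) (g : nat -> 'rV[R]_p -> R) (gg : nat -> 'rV[R]_p -> 'rV[R]_p)
  (Mvg : nat -> R) (h : 'rV[R]_p -> R) (xs : 'rV[R]_p)
  (L0 eps : R) (x0 : 'rV[R]_p)
  (x : nat -> 'rV[R]_p) (L : nat -> R) (i : nat -> nat) :
  is_norm nrm ->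
  prox_function nrm d gd ->
  0 <= v <= 1 -> 0 < Mv ->
  (forall t, (t <= T)%N ->
     [/\ convex_fun (g t), is_subgrad (g t) (gg t),
         holder_grad nrm (gg t) v (Mvg t) & Mvg t < Mv]) ->
  convex_fun h ->
  (forall y, (T.+1%:R)^-1 * (\sum_(0 <= t < T.+1) g t xs) + h xs
             <= (T.+1%:R)^-1 * (\sum_(0 <= t < T.+1) g t y) + h y) ->
  0 < L0 -> 0 < eps ->
  O_UPGM d gd h g gg L0 eps x0 T x L i ->
  \sum_(0 <= t < T.+1) (L t.+1)^-1 * ((g t (x t.+1) + h (x t.+1)) - (g t xs + h xs))
    <= eps / 2 * (\sum_(1 <= t < T.+2) (L t)^-1) + 2 * bregman d gd x0 xs.
Proof.
move=> _ prox _ _ gt convh _ L00 _ run.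
have [gradd _ _ _] := prox; have [x0E _ step] := run.
set r := fun t => 2 * bregman d gd (x t) xs.
have step_le : forall t, (t < T.+1)%N ->
    (L t.+1)^-1 * ((g t (x t.+1) + h (x t.+1)) - (g t xs + h xs))
    <= eps / 2 * (L t.+1)^-1 + (r t - r t.+1).
  move=> t tT; have [_ miny test LE] := step t tT; have [_ subg _ _] := gt t tT.
  have Lt1 : 0 < L t.+1 by apply: O_UPGM_L_gt0 run _ tT.
  have ME : 2 ^+ i t * L t = 2 * L t.+1 by rewrite LE; field.
  have M0 : 0 < 2 * L t.+1 by rewrite mulr_gt0.
  rewrite ME in miny test.
  have := upgm_step_le xs gradd convh M0 subg miny test.
  have Lt1V : 0 < (L t.+1)^-1 by rewrite invr_gt0.
  rewrite -(ler_pM2l Lt1V) => /le_trans; apply.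
  rewrite /r; set u := bregman _ _ (x t) xs; set w := bregman _ _ (x t.+1) xs.
  by rewrite le_eqVlt; apply/orP; left; apply/eqP; field; exact: lt0r_neq0.
have := ler_sum_telescope step_le.
rewrite -mulr_sumr big_add1 /r x0E => /le_trans; apply.
by rewrite lerD2l lerBlDr lerDl mulr_ge0 // (bregman_ge0 _ _ prox).
Qed.
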